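(* Let $G$ be an $(N,k)$ Adinkra obtained from an $N$-cube Adinkra by quotienting by a doubly even $(N,k)$ code $C$, so that its vertices are labeled by cosets $x+C\in\mathbb{Z}_2^N/C$. Let $D$ be a standard form generating set of $C$. For two vertices $x+C$ and $y+C$, there exists an automorphism of $G$ disregarding vertex coloring (i.e. ignoring both heights and the boson/fermion bipartition) mapping $x+C$ to $y+C$ if and only if $\langle x,c\rangle\equiv\langle y,c\rangle\pmod 2$ for every $c\in D$.
   Context: An Adinkra of dimension $N$ is a finite connected simple graph $G=(V,E)$ with: a bipartition of $V$ into bosons and fermions (every edge joins a boson and a fermion); a height function $\mathrm{hgt}:V\to\mathbb{Z}$ with adjacent vertices at heights differing by $1$; a coloring of $E$ by colors $\{1,\dots,N\}$ such that each vertex is incident to exactly one edge of each color; an edge parity $\pi:E\to\mathbb{Z}_2$ (parity $1$ = dashed); such that every path with edge colors $(i,j)$, $i\ne j$, lies in a unique 4-cycle with colors $(i,j,i,j)$, each having an odd number of dashed edges. If $|V|=2^{N-k}$, $G$ is an $(N,k)$ Adinkra. Switching a vertex reverses the parity of its incident edges. A doubly even $(N,k)$ code $C$ is a $k$-dimensional subspace of $\mathbb{Z}_2^N$ all of whose elements have weight $\equiv0\pmod4$; $\langle u,v\rangle=\sum_i u_iv_i \bmod 2$, and $C$ is self-orthogonal. A standard form generating set of $C$ is a basis $g_1,\dots,g_k$ of $C$ such that for some $k$ coordinates the restrictions of the $g_i$ to these coordinates form the $k\times k$ identity matrix. Quotient construction: label the vertices of an $N$-cube Adinkra by $\mathbb{Z}_2^N$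 so that color-$i$ edges join $v$ and $v+e_i$, and (when vertices differing by elements of $C$ have matching edge parities) identify vertices whose labels differ by elements of $C$; the result has vertices $x+C$, color-$i$ edges joining $x+C$ and $x+e_i+C$, and $\langle x,c\rangle$ for $c\in C$ depends only on the coset. An automorphism disregarding vertex coloring is a permutation of $V$ preserving adjacency and edge colors which becomes parity-preserving after switching some set of vertices. *)

From HB Require Import structures.
From mathcomp Require Import all_boot all_order all_algebra all_fingroup.
Set Implicit Arguments. Unset Strict Implicit. Unset Printing Implicit Defensive.
Import GRing.Theory.
Local Open Scope ring_scope.

Notation vec N := 'rV['F_2]_N.

Definition unitv (N : nat) (i : 'I_N) : vec N := delta_mx 0 i.

Definition wt (N : nat) (x : vec N) : nat := #|[set i | x 0 i != 0]|.

Definition ip (N : nat) (u v : vec N) : 'F_2 := \sum_i u 0 i * v 0 i.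

Definition doubly_even_code (N k : nat) (C : {vspace vec N}) : Prop :=
  [/\ \dim C = k,
      (forall c, c \in C -> wt c %% 4 = 0)%N
    & (forall u v, u \in C -> v \in C -> ip u v = 0)].

Definition standard_form (N k : nat) (C : {vspace vec N}) (D : k.-tuple (vec N)) : Prop :=
  basis_of C D /\
  exists f : 'I_k -> 'I_N, injective f /\
    forall i j : 'I_k, (tnth D i) 0 (f j) = (i == j)%:R.

(* Edge parities of an N-cube Adinkra: p x i is the parity (true = dashed)
   of the colour-i edge joining x and x + e_i. *)
Definition cube_adinkra_parity (N : nat) (p : vec N -> 'I_N -> bool) : Prop :=
  (forall x i, p (x + unitv i) i = p x i) /\
  (forall x (i j : 'I_N), i != j ->
     p x i (+) p (x + unitv i) j (+) p (x + unitv j) i (+) p x j = true).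

Definition coset_labeling (N : nat) (C : {vspace vec N}) (V : finType) (q : vec N -> V) : Prop :=
  (forall v : V, exists x, q x = v) /\
  (forall x y, q x = q y <-> x - y \in C).

Definition qedge (N : nat) (V : finType) (q : vec N -> V) (i : 'I_N) (u v : V) : Prop :=
  exists x, u = q x /\ v = q (x + unitv i).

(* automorphism disregarding vertex colouring: permutation of V preserving
   adjacency with edge colours, which becomes parity preserving after
   switching some set s of vertices *)
Definition auto_disregarding_vertex_coloring (N : nat) (V : finType) (q : vec N -> V)
    (pG : V -> 'I_N -> bool) (sigma : {perm V}) : Prop :=
  (forall i u v, qedge q i u v <-> qedge q i (sigma u) (sigma v)) /\
  exists s : V -> bool, forall i u v, qedge q i u v ->
     pG (sigma u) i = pG u i (+) s u (+) s v.

From HB Require Import structures.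
From mathcomp Require Import all_boot all_order all_algebra all_fingroup.
From mathcomp Require Import ring.
Import GRing.Theory.
Set Implicit Arguments. Unset Strict Implicit. Unset Printing Implicit Defensive.
Local Open Scope ring_scope.

(* Summing the parities along the monotone path from 0 to x gives a [potential] W
   with W (x + e_i) + W x = p(x, i) + x_(i+1) + ... + x_N, so switching by W turns
   p into the standard parity of the cube.  Hence translating by t changes p by the
   coboundary of S_t z = W (z + t) + W z + sum_(i<j) z_i t_j, and every other
   switching function achieving this differs from S_t by a constant.  Translation
   by t thus yields an automorphism of the quotient iff S_t is C-invariant, and for
   c of even weight S_t (z + c) - S_t z = <t, c>.  Conversely, since the cube is
   connected, every automorphism disregarding vertex colouring is a translation. *)

Lemma F2_char2 : 2%:R = 0 :> 'F_2.
Proof. exact/eqP. Qed.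

Lemma F2_addrr (a : 'F_2) : a + a = 0.
Proof. by rewrite -mulr2n -mulr_natr F2_char2 mulr0. Qed.

Lemma F2_addr_swap (a b c d : 'F_2) : a + b = c + d -> a + c = b + d.
Proof.
move=> abcd; have -> : b + d = a + b + (a + d) by ring: F2_char2.
by rewrite abcd; ring: F2_char2.
Qed.

Lemma F2_natr_neq0 (a : 'F_2) : (a != 0)%:R = a.
Proof. by case: a => -[|[|m]] lt2 //; apply/val_inj. Qed.

Lemma F2_natr_addb (a b : bool) : (a (+) b)%:R = a%:R + b%:R :> 'F_2.
Proof. by case: a; case: b; apply/eqP. Qed.

Lemma F2_natr_inj : injective (fun b : bool => b%:R : 'F_2).
Proof. by case; case=> //= /eqP. Qed.

Section Cube.
Variable N : nat.
Implicit Types (x y z t u v c : vec N) (i j : 'I_N).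

Lemma unitvE i j : unitv i 0 j = (j == i)%:R.
Proof. by rewrite /unitv mxE eqxx. Qed.

Lemma cube_connected (Q : vec N -> Prop) :
  (forall z i, Q z -> Q (z + unitv i)) -> forall x y, Q x -> Q y.
Proof.
move=> QS x y Qx.
have Qpath (s : seq 'I_N) : Q (x + \sum_(i <- s) (y - x) 0 i *: unitv i).
  elim: s => [|i s IHs]; first by rewrite big_nil addr0.
  rewrite big_cons addrCA addrC -[(y - x) 0 i]F2_natr_neq0.
  by case: (_ != 0); rewrite ?scale0r ?scale1r ?addr0 //; apply: QS.
by move: (Qpath (enum 'I_N)); rewrite big_enum /unitv -row_sum_delta addrC subrK.
Qed.

Lemma cube_invariant_const (f : vec N -> 'F_2) :
  (forall z i, f (z + unitv i) = f z) -> forall x y, f x = f y.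
Proof. by move=> fS x y; apply: (@cube_connected (fun z => f x = f z)) => // z i ->. Qed.

Definition tail_sum i x : 'F_2 := \sum_(j : 'I_N | (i < j)%N) x 0 j.

Definition ltform u v : 'F_2 := \sum_i u 0 i * tail_sum i v.

Lemma tail_sumD i x y : tail_sum i (x + y) = tail_sum i x + tail_sum i y.
Proof. by rewrite /tail_sum -big_split; apply: eq_bigr => j _; rewrite mxE. Qed.

Lemma tail_sumZ i a x : tail_sum i (a *: x) = a * tail_sum i x.
Proof. by rewrite /tail_sum mulr_sumr; apply: eq_bigr => j _; rewrite mxE. Qed.

Lemma ltformDl x y v : ltform (x + y) v = ltform x v + ltform y v.
Proof. by rewrite /ltform -big_split; apply: eq_bigr => j _; rewrite mxE mulrDl. Qed.

Lemma ltform_unitv i v : ltform (unitv i) v = tail_sum i v.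
Proof.
rewrite /ltform (bigD1 i) //= unitvE eqxx mul1r big1 ?addr0 // => j ji.
by rewrite unitvE (negbTE ji) mul0r.
Qed.

Lemma ltformC u v :
  ltform u v + ltform v u = (\sum_j u 0 j) * (\sum_j v 0 j) + ip u v.
Proof.
have ltformE : ltform v u = \sum_i u 0 i * \sum_(j : 'I_N | (j < i)%N) v 0 j.
  rewrite /ltform /tail_sum.
  under eq_bigr do rewrite mulr_sumr big_mkcond.
  rewrite exchange_big; apply: eq_bigr => i _; rewrite mulr_sumr [RHS]big_mkcond.
  by apply: eq_bigr => j _; case: ifP; rewrite // mulrC.
have sum_split i : \sum_j v 0 j = \sum_(j : 'I_N | (j < i)%N) v 0 j + v 0 i + tail_sum i v.
  rewrite (bigD1 i) //= (bigID (fun j : 'I_N => (i < j)%N)) /= /tail_sum.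
  rewrite (eq_bigl (fun j : 'I_N => (i < j)%N) _ (fun j => _)); last first.
    by move=> j; rewrite -val_eqE /=; case: ltngtP.
  rewrite [X in _ + (_ + X)](eq_bigl (fun j : 'I_N => (j < i)%N)); first by ring.
  by move=> j; rewrite -val_eqE /=; case: ltngtP.
rewrite ltformE /ltform /ip mulr_suml -!big_split /=; apply: eq_bigr => i _.
by rewrite (sum_split i); ring: F2_char2.
Qed.

Lemma sum_coord_wt c : \sum_j c 0 j = (wt c)%:R.
Proof.
rewrite -(eq_bigr _ (fun j _ => F2_natr_neq0 (c 0 j))) -natr_sum /wt -sum1_card.
by congr _%:R; rewrite [RHS]big_mkcond; apply: eq_bigr => j _; rewrite inE.
Qed.

Lemma ipBl x y v : ip (x - y) v = ip x v - ip y v.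
Proof. by rewrite /ip -sumrB; apply: eq_bigr => j _; rewrite !mxE mulrBl. Qed.

Lemma ip_basis_vanish k (C : {vspace vec N}) (D : k.-tuple (vec N)) t :
  basis_of C D -> (forall c, c \in C -> ip t c = 0) <-> (forall d, d \in D -> ip t d = 0).
Proof.
have ip_mx v : ip t v = (v *m t^T) 0 0.
  by rewrite /ip mxE; apply: eq_bigr => j _; rewrite mxE mulrC.
move=> D_basis; split=> [tC d dD | tD c cC].
  by apply: tC; rewrite -(span_basis D_basis) memv_span.
have cD : c \in <<D>>%VS by rewrite (span_basis D_basis).
rewrite (coord_span cD) ip_mx mulmx_suml summxE big1 // => i _.
by rewrite -scalemxAl mxE -ip_mx tD ?mulr0 // mem_nth ?size_tuple.
Qed.
End Cube.

Section Potential.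
Variables (N : nat) (p : vec N -> 'I_N -> bool).
Hypothesis p_adinkra : cube_adinkra_parity p.
Implicit Types (x y z t c : vec N) (i j : 'I_N).

Definition parity x i : 'F_2 := (p x i)%:R.

Lemma parity_edge x i : parity (x + unitv i) i = parity x i.
Proof. by rewrite /parity p_adinkra.1. Qed.

Lemma parity_square x i j : i != j ->
  parity (x + unitv i) j = parity (x + unitv j) i + parity x i + parity x j + 1.
Proof.
move=> ij; have := p_adinkra.2 x i j ij; rewrite /parity.
by case: (p x i); case: (p _ j); case: (p _ i); case: (p x j) => // _; apply/eqP.
Qed.

Definition prefix (n : nat) x : vec N := \row_k (if (k < n)%N then x 0 k else 0).

Lemma prefixD n x y : prefix n (x + y) = prefix n x + prefix n y.
Proof. by apply/rowP => k; rewrite !mxE; case: ifP; rewrite ?addr0. Qed.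

Lemma prefix_unitv n i : prefix n (unitv i) = if (i < n)%N then unitv i else 0.
Proof.
apply/rowP => k; rewrite mxE; have [->|ki] := eqVneq k i.
  by case: ifP; rewrite ?mxE.
by rewrite unitvE (negbTE ki); case: ifP; case: ifP; rewrite ?mxE ?unitvE ?(negbTE ki).
Qed.

Lemma prefixS n x j : j = n :> nat -> prefix n.+1 x = prefix n x + x 0 j *: unitv j.
Proof.
move=> jn; apply/rowP => k; rewrite !mxE eqxx /= -val_eqE /= jn ltnS leq_eqVlt.
case: ltngtP => [_|_|kn] /=; rewrite ?mulr0 ?addr0 ?mulr1 ?add0r //.
by rewrite (val_inj (etrans kn (esym jn))).
Qed.

Lemma prefix_full x : prefix N x = x.
Proof. by apply/rowP => k; rewrite mxE ltn_ord. Qed.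

Lemma tail_sum_unitv i j : tail_sum i (unitv j) = (i < j)%N%:R.
Proof.
rewrite /tail_sum; case: ltnP => [ij|ji].
  rewrite (bigD1 j) //= unitvE eqxx big1 ?addr0 // => k /andP[_ kj].
  by rewrite unitvE (negbTE kj).
by rewrite big1 // => k ik; rewrite unitvE; case: eqP => // kj; move: ik; rewrite kj ltnNge ji.
Qed.

Lemma tail_sum_prefix i n x : (n <= i.+1)%N -> tail_sum i (prefix n x) = 0.
Proof.
move=> ni; rewrite /tail_sum big1 // => k ik; rewrite mxE.
by case: ifP => // kn; move: (leq_trans kn ni); rewrite ltnS leqNgt ik.
Qed.

Definition potential_upto (n : nat) x : 'F_2 :=
  \sum_(j : 'I_N | (j < n)%N) x 0 j * parity (prefix j x) j.

Lemma potential_uptoS n x j : j = n :> nat ->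
  potential_upto n.+1 x = potential_upto n x + x 0 j * parity (prefix n x) j.
Proof.
move=> jn; rewrite /potential_upto (bigD1 j) /=; last by rewrite jn.
rewrite addrC jn; congr (_ + _).
by apply: eq_bigl => k; rewrite -val_eqE /= jn ltnS leq_eqVlt; case: ltngtP.
Qed.

Definition potential x : 'F_2 := potential_upto N x.

Lemma potential_upto_cobound n x i : (n <= N)%N ->
  potential_upto n (x + unitv i) = potential_upto n x +
    (if (i < n)%N then parity (prefix n x) i + tail_sum i (prefix n x) else 0).
Proof.
elim: n => [|n IHn] nN.
  by rewrite /potential_upto !big_pred0 ?addr0.
have [j jn] : {j : 'I_N | j = n :> nat} by exists (Ordinal nN).
rewrite !(potential_uptoS _ jn) IHn ?(ltnW nN) // mxE unitvE prefixD prefix_unitv.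
rewrite (prefixS x jn) tail_sumD tail_sumZ tail_sum_unitv -[x 0 j]F2_natr_neq0.
case: (ltngtP n i) => [n_lt_i | i_lt_n | n_eq_i].
- have ji : (j == i) = false by rewrite -val_eqE /= jn ltn_eqF.
  by rewrite ji ltnS leqNgt n_lt_i /= !addr0.
- have ji : (j == i) = false by rewrite -val_eqE /= jn gtn_eqF.
  rewrite ji ltnS (ltnW i_lt_n) jn i_lt_n addr0.
  have := parity_square (prefix n x) (negbT ji).
  by case: (_ != 0) => /= sq; rewrite ?scale0r ?scale1r ?addr0 ?sq; ring: F2_char2.
- have ji : j = i by apply: val_inj; rewrite /= jn.
  rewrite ji eqxx -n_eq_i ltnSn ltnn tail_sum_prefix ?n_eq_i // !addr0.
  case: (_ != 0); rewrite /= ?scale0r ?scale1r ?addr0 ?parity_edge; ring.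
Qed.

Lemma potential_cobound x i :
  potential (x + unitv i) = potential x + parity x i + tail_sum i x.
Proof. by rewrite /potential potential_upto_cobound // ltn_ord prefix_full addrA. Qed.

Lemma potential_shift c t z : (forall x i, p (x + c) i = p x i) ->
  potential (z + t + c) + potential (z + t) + potential (z + c) + potential z = ltform t c.
Proof.
move=> pc; pose G z := potential (z + c) + potential z + ltform z c.
have G_invariant y i : G (y + unitv i) = G y.
  rewrite /G [y + unitv i + c]addrAC !potential_cobound ltformDl ltform_unitv tail_sumD.
  by rewrite /parity pc; ring: F2_char2.
rewrite -[LHS]addr0 -(subrr (G z)) {1}(cube_invariant_const G_invariant z (z + t)).
by rewrite /G ltformDl; ring: F2_char2.
Qed.

Definition translate_switch t z : 'F_2 := potential (z + t) + potential z + ltform z t.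

Definition translation_switching t (S : vec N -> 'F_2) :=
  forall z i, S (z + unitv i) = S z + parity z i + parity (z + t) i.

Lemma translate_switchP t : translation_switching t (translate_switch t).
Proof.
move=> z i; rewrite /translate_switch [z + unitv i + t]addrAC !potential_cobound.
by rewrite ltformDl ltform_unitv tail_sumD; ring: F2_char2.
Qed.

Lemma translation_switching_unique t S : translation_switching t S ->
  forall x y, S x + S y = translate_switch t x + translate_switch t y.
Proof.
move=> St x y; apply: F2_addr_swap.
apply: (@cube_invariant_const _ (fun z => S z + translate_switch t z)) => z i.
by rewrite St translate_switchP; ring: F2_char2.
Qed.

Lemma translate_switch_shift t c z :
  (forall x i, p (x + c) i = p x i) -> \sum_j c 0 j = 0 ->
  translate_switch t (z + c) = translate_switch t z + ip t c.
Proof.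
move=> pc c_even; have := ltformC t c; rewrite c_even mulr0 add0r => <-.
rewrite -(potential_shift t z pc) /translate_switch [z + c + t]addrAC ltformDl.
by ring: F2_char2.
Qed.

Lemma translation_switching_iff (C : {vspace vec N}) t :
  (forall c, c \in C -> \sum_j c 0 j = 0) ->
  (forall x c i, c \in C -> p (x + c) i = p x i) ->
  (exists2 S, (forall z c, c \in C -> S (z + c) = S z) & translation_switching t S)
  <-> (forall c, c \in C -> ip t c = 0).
Proof.
move=> C_even pC; split=> [[S SC St] c cC | tC].
  have S_c : S c = S 0 by rewrite -{1}(add0r c) SC.
  have := translation_switching_unique St c 0.
  rewrite S_c F2_addrr -{1}(add0r c).
  rewrite (translate_switch_shift t 0 (fun x i => pC x c i cC) (C_even c cC)) => S0.
  by rewrite [RHS]S0; ring: F2_char2.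
exists (translate_switch t); last exact: translate_switchP.
move=> z c cC.
by rewrite (translate_switch_shift _ _ (fun x i => pC x c i cC)) ?tC ?addr0 ?C_even.
Qed.

End Potential.

Section Quotient.
Variables (N : nat) (C : {vspace vec N}) (V : finType) (q : vec N -> V).
Hypothesis q_label : coset_labeling C q.
Implicit Types (x y z t c : vec N) (u v : V) (i : 'I_N).

Lemma coset_labelD x y z : q x = q y -> q (x + z) = q (y + z).
Proof. by move/q_label.2 => xy; apply/q_label.2; rewrite opprD addrACA subrr addr0. Qed.

Lemma coset_label_shift x c : c \in C -> q (x + c) = q x.
Proof. by move=> cC; apply/q_label.2; rewrite addrC addKr. Qed.

Definition coset_rep v : vec N := odflt 0 [pick z | q z == v].

Lemma coset_repK v : q (coset_rep v) = v.
Proof.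
rewrite /coset_rep; case: pickP => [z /eqP // | noz].
by have [z zv] := q_label.1 v; move: (noz z); rewrite zv eqxx.
Qed.

Lemma coset_rep_label x : exists2 c, c \in C & coset_rep (q x) = x + c.
Proof.
exists (coset_rep (q x) - x); last by rewrite addrC subrK.
by apply/q_label.2; rewrite coset_repK.
Qed.

Lemma translation_perm t : {sigma : {perm V} | forall z, sigma (q z) = q (z + t)}.
Proof.
have tr_inj : injective (fun v => q (coset_rep v + t)).
  by move=> u v /(coset_labelD (- t)); rewrite !addrK !coset_repK.
exists (perm tr_inj) => z; rewrite permE; apply: coset_labelD; exact: coset_repK.
Qed.

Lemma translation_qedge (sigma : {perm V}) t : (forall z, sigma (q z) = q (z + t)) ->
  forall i u v, qedge q i u v <-> qedge q i (sigma u) (sigma v).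
Proof.
move=> sigma_tr i u v; split=> [[z [-> ->]] | [w [uw vw]]].
  by exists (z + t); rewrite !sigma_tr addrAC.
exists (coset_rep u); rewrite coset_repK; split=> //; apply: (@perm_inj _ sigma).
by rewrite vw sigma_tr addrAC; apply: coset_labelD; rewrite -sigma_tr coset_repK.
Qed.

Lemma qedge_translation (sigma : {perm V}) x y :
  (forall i u v, qedge q i u v -> qedge q i (sigma u) (sigma v)) ->
  sigma (q x) = q y -> forall z, sigma (q z) = q (z + (y - x)).
Proof.
move=> sigma_edge sigma_x z.
apply: (@cube_connected _ (fun z => sigma (q z) = q (z + (y - x))) _ x); last first.
  by rewrite sigma_x addrC subrK.
move=> w i sigma_w; have [w' [w_w' ->]] : qedge q i (sigma (q w)) (sigma (q (w + unitv i))).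
  by apply: sigma_edge; exists w.
by rewrite addrAC; apply: coset_labelD; rewrite -w_w'.
Qed.

Variables (p : vec N -> 'I_N -> bool) (pG : V -> 'I_N -> bool).
Hypothesis pG_label : forall x i, pG (q x) i = p x i.

Lemma translation_auto_iff (sigma : {perm V}) t : (forall z, sigma (q z) = q (z + t)) ->
  auto_disregarding_vertex_coloring q pG sigma <->
  exists2 S, (forall z c, c \in C -> S (z + c) = S z) & translation_switching p t S.
Proof.
move=> sigma_tr; split=> [[_ [s s_switch]] | [S SC St]].
  exists (fun z => (s (q z))%:R) => [z c cC | z i]; first by rewrite coset_label_shift.
  have := s_switch i _ _ (ex_intro _ z (conj erefl erefl)).
  rewrite sigma_tr !pG_label => /(congr1 (fun b : bool => b%:R : 'F_2)).
  by rewrite /parity !F2_natr_addb => ->; ring: F2_char2.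
split; first exact: translation_qedge.
exists (fun v => S (coset_rep v) != 0) => i _ _ [z [-> ->]].
have S_rep w : S (coset_rep (q w)) = S w by have [c cC ->] := coset_rep_label w; apply: SC.
apply: F2_natr_inj; rewrite /= sigma_tr !pG_label !F2_natr_addb !F2_natr_neq0 !S_rep.
by rewrite -/(parity p _ _) St; ring: F2_char2.
Qed.

End Quotient.

Theorem mainTheorem5 (N k : nat) (C : {vspace vec N}) (D : k.-tuple (vec N))
    (p : vec N -> 'I_N -> bool) (V : finType) (q : vec N -> V)
    (pG : V -> 'I_N -> bool) :
  doubly_even_code k C ->
  standard_form C D ->
  cube_adinkra_parity p ->
  (forall x c i, c \in C -> p (x + c) i = p x i) ->
  coset_labeling C q ->
  (forall x i, pG (q x) i = p x i) ->
  forall x y : vec N,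
    (exists sigma : {perm V},
        auto_disregarding_vertex_coloring q pG sigma /\ sigma (q x) = q y) <->
    (forall c, c \in D -> ip x c = ip y c).
Proof.
move=> [_ C_wt _] [D_basis _] p_adinkra pC q_label pG_label x y.
have C_even c : c \in C -> \sum_j c 0 j = 0.
  move/C_wt => wt4; rewrite sum_coord_wt (divn_eq (wt c) 4) wt4 addn0 natrM.
  by rewrite (_ : 4%:R = 0) ?mulr0 //; apply/eqP.
have switching_iff := translation_switching_iff p_adinkra (y - x) C_even pC.
have ip_iff : (forall c, c \in C -> ip (y - x) c = 0) <-> (forall d, d \in D -> ip x d = ip y d).
  rewrite (ip_basis_vanish _ D_basis); split=> xy d /xy.
    by rewrite ipBl => /eqP; rewrite subr_eq0 => /eqP.
  by rewrite ipBl => ->; rewrite subrr.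
rewrite -ip_iff -switching_iff; split=> [[sigma [sigma_auto sigma_x]] | S_switch].
  have sigma_tr := qedge_translation q_label (fun i u v => (sigma_auto.1 i u v).1) sigma_x.
  exact/(translation_auto_iff q_label pG_label sigma_tr).
have [sigma sigma_tr] := translation_perm q_label (y - x).
exists sigma; split; first exact/(translation_auto_iff q_label pG_label sigma_tr).
by rewrite sigma_tr addrC subrK.
Qed.
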